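(* Let $G$ be a group generated by $n$ elements $x_1,\dots,x_n$ such that $[e]_g$ is a subgroup of $G$ for every $g\in G$. Then ${\rm wid}(\gamma_2(G))\le n-1$, and ${\rm wid}(\gamma_k(G))\le n^{k-2}(n-1)/2$ for every $k\ge 3$.
   Context: $[x,y]=x^{-1}y^{-1}xy$; $[e]_g=\{[x,g]\mid x\in G\}$. The lower central series is $\gamma_1(G)=G$, $\gamma_{k+1}(G)=[\gamma_k(G),G]$; $\gamma_k(G)$ is the verbal subgroup defined by the word $\gamma_k\in F_k$ given by $\gamma_1(x_1)=x_1$, $\gamma_{k+1}(x_1,\dots,x_{k+1})=[\gamma_k(x_1,\dots,x_k),x_{k+1}]$. For a word $w\in F_m$, $w(G)$ is the subgroup generated by all values $w(g_1,\dots,g_m)$, $g_i\in G$; for $g\in w(G)$, $l_w(g)$ is the least number of values $w(g_1,\dots,g_m)^{\pm1}$ whose product is $g$, and ${\rm wid}(w(G))=\sup_{g\in w(G)} l_w(g)$. Here ${\rm wid}(\gamma_k(G))$ is the width with respect to the word $\gamma_k$. *)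

From Stdlib Require Import List Arith.
Import ListNotations.
Set Implicit Arguments.

Record group := Group {
  carrier :> Type;
  gmul : carrier -> carrier -> carrier;
  ginv : carrier -> carrier;
  gone : carrier;
  gmulA : forall x y z, gmul x (gmul y z) = gmul (gmul x y) z;
  gmul1l : forall x, gmul gone x = x;
  gmul1r : forall x, gmul x gone = x;
  gmulVl : forall x, gmul (ginv x) x = gone;
  gmulVr : forall x, gmul x (ginv x) = gone
}.

Arguments gmul {g} _ _.
Arguments ginv {g} _.
Arguments gone : clear implicits.

Section Defs.
Variable G : group.

Definition comm (x y : G) : G :=
  gmul (gmul (gmul (ginv x) (ginv y)) x) y.

Inductive gen (S : G -> Prop) : G -> Prop :=
  | gen_base : forall x, S x -> gen S x
  | gen_one : gen S (gone G)
  | gen_mul : forall x y, gen S x -> gen S y -> gen S (gmul x y)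
  | gen_inv : forall x, gen S x -> gen S (ginv x).

Definition is_subgroup (S : G -> Prop) : Prop :=
  S (gone G) /\ (forall x y, S x -> S y -> S (gmul x y)) /\
  (forall x, S x -> S (ginv x)).

(* [e]_g = { [x,g] | x in G } *)
Definition comm_set (g : G) : G -> Prop := fun h => exists x, h = comm x g.

(* The word gamma_k(x_1,...,x_k), evaluated at a : nat -> G (a i = x_{i+1});
   gamma_1(x_1) = x_1, gamma_{k+1} = [gamma_k(x_1..x_k), x_{k+1}].
   Only meaningful for k >= 1. *)
Fixpoint gamma_word (k : nat) (a : nat -> G) : G :=
  match k with
  | 0 => a 0
  | 1 => a 0
  | S k' => comm (gamma_word k' a) (a k')
  end.

Definition gamma_values (k : nat) : G -> Prop :=
  fun g => exists a : nat -> G, g = gamma_word k a.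

Definition gamma_sub (k : nat) : G -> Prop := gen (gamma_values k).

Definition signed (p : bool * G) : G := if fst p then snd p else ginv (snd p).

Definition prod_signed (l : list (bool * G)) : G :=
  fold_right (fun p acc => gmul (signed p) acc) (gone G) l.

(* wid(gamma_k(G)) <= m : every element of gamma_k(G) is a product of at most m
   values of gamma_k or their inverses. *)
Definition gamma_width_le (k m : nat) : Prop :=
  forall g, gamma_sub k g ->
    exists l : list (bool * G), length l <= m /\
      Forall (fun p => gamma_values k (snd p)) l /\ prod_signed l = g.

Definition generated_by (xs : list G) : Prop :=
  forall g : G, gen (fun y => In y xs) g.

End Defs.

Arguments comm {G} _ _.
Arguments is_subgroup {G} _.
Arguments comm_set {G} _ _.
Arguments generated_by {G} _.
Arguments signed {G} _.
Arguments prod_signed {G} _.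

(* If every [e]_c is a subgroup, it is normal, because [x,c]^h = [xh,c] [h,c]^-1.
   Hence M = [e]_{c_1} ... [e]_{c_m} is a normal subgroup, and each of its elements
   is a product of m values [x,c_i]^{±1} of a word γ_k as soon as every [c_i, x] is.
   It remains to choose the c_i with γ_k(G) ⊆ M.  Modulo a normal subgroup N,
   [d,y] ∈ N for all y once this holds for the generators y; iterating this through
   the upper central series of G relative to M, γ_k(G) ⊆ M follows from
   [x_i, x_j, y_1, ..., y_{k-2}] ∈ M for generators x_i, x_j, y_l.  For k = 2 the
   sets [e]_{x_1}, ..., [e]_{x_{n-1}} suffice; for k >= 3 take the n(n-1)/2 · n^(k-3)
   commutators [x_i, x_j, y_1, ..., y_{k-3}] with i < j. *)

From Stdlib Require Import List Arith Lia.
Import ListNotations.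

Local Notation "x ** y" := (gmul x y) (at level 40, left associativity).

Section GroupIdentities.
Context {G : group}.
Implicit Types x y z a b c h : G.

Lemma gmulA_r x y z : x ** y ** z = x ** (y ** z).
Proof. symmetry; apply gmulA. Qed.

Lemma gmulKl x y : ginv x ** (x ** y) = y.
Proof. rewrite gmulA, gmulVl, gmul1l; reflexivity. Qed.

Lemma gmulKr x y : x ** (ginv x ** y) = y.
Proof. rewrite gmulA, gmulVr, gmul1l; reflexivity. Qed.

Lemma gmul_cancel_l a x y : a ** x = a ** y -> x = y.
Proof. intro H. rewrite <- (gmulKl a x), H, gmulKl. reflexivity. Qed.

Lemma ginv_unique x y : x ** y = gone G -> ginv x = y.
Proof. intro H. apply (gmul_cancel_l x). rewrite gmulVr, H. reflexivity. Qed.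

Lemma ginv_mul x y : ginv (x ** y) = ginv y ** ginv x.
Proof. apply ginv_unique. rewrite !gmulA_r, gmulKr, gmulVr. reflexivity. Qed.

Lemma ginv_inv x : ginv (ginv x) = x.
Proof. apply ginv_unique, gmulVl. Qed.

Lemma ginv_one : ginv (gone G) = gone G.
Proof. apply ginv_unique, gmul1l. Qed.

End GroupIdentities.

Ltac gsimpl := repeat progress (rewrite ?ginv_mul, ?ginv_inv, ?ginv_one, ?gmulA_r,
  ?gmul1l, ?gmul1r, ?gmulVl, ?gmulVr, ?gmulKl, ?gmulKr).

Definition conj {G : group} (x h : G) : G := ginv h ** x ** h.

Section CommutatorIdentities.
Context {G : group}.
Implicit Types x y a b c g h u v : G.

Lemma comm_inv x y : ginv (comm x y) = comm y x.
Proof. unfold comm; gsimpl; reflexivity. Qed.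

Lemma comm_one_l c : comm (gone G) c = gone G.
Proof. unfold comm; gsimpl; reflexivity. Qed.

Lemma comm_self c : comm c c = gone G.
Proof. unfold comm; gsimpl; reflexivity. Qed.

Lemma comm_mul_l a b c : comm (a ** b) c = conj (comm a c) b ** comm b c.
Proof. unfold comm, conj; gsimpl; reflexivity. Qed.

Lemma comm_inv_l a c : comm (ginv a) c = ginv (conj (comm a c) (ginv a)).
Proof. unfold comm, conj; gsimpl; reflexivity. Qed.

Lemma conj_comm_r x g h : conj (comm x g) h = comm (x ** h) g ** ginv (comm h g).
Proof. unfold comm, conj; gsimpl; reflexivity. Qed.

Lemma conj_comm g y h : conj (comm g (conj y (ginv h))) h = comm (conj g h) y.
Proof. unfold comm, conj; gsimpl; reflexivity. Qed.

Lemma conj_mul u v h : conj (u ** v) h = conj u h ** conj v h.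
Proof. unfold conj; gsimpl; reflexivity. Qed.

End CommutatorIdentities.

Definition normal {G : group} (M : G -> Prop) : Prop :=
  is_subgroup M /\ forall x h, M x -> M (conj x h).

Section NormalSubgroups.
Context {G : group} {M : G -> Prop} (HM : normal M).

Lemma normal_one : M (gone G).
Proof. apply HM. Qed.

Lemma normal_mul x y : M x -> M y -> M (x ** y).
Proof. apply HM. Qed.

Lemma normal_inv x : M x -> M (ginv x).
Proof. apply HM. Qed.

Lemma normal_conj x h : M x -> M (conj x h).
Proof. apply HM. Qed.

Lemma normal_comm_sym x y : M (comm x y) -> M (comm y x).
Proof. intro H. rewrite <- comm_inv. apply normal_inv, H. Qed.

Lemma normal_comm_l_subgroup d : is_subgroup (fun y => M (comm y d)).
Proof.
  split; [|split].
  - rewrite comm_one_l. apply normal_one.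
  - intros a b Ha Hb. rewrite comm_mul_l. apply normal_mul; [apply normal_conj|]; auto.
  - intros a Ha. rewrite comm_inv_l. apply normal_inv, normal_conj, Ha.
Qed.

End NormalSubgroups.

Lemma generated_by_ind {G : group} (xs : list G) (P : G -> Prop) :
  generated_by xs -> is_subgroup P -> (forall x, In x xs -> P x) -> forall g, P g.
Proof. intros Hgen [H1 [Hm Hi]] Hx g. induction (Hgen g); auto. Qed.

Lemma normal_comm_generators {G : group} (xs : list G) (N : G -> Prop) (d : G) :
  generated_by xs -> normal N -> (forall x, In x xs -> N (comm d x)) ->
  forall y, N (comm d y).
Proof.
  intros Hgen HN Hx y. apply (normal_comm_sym HN). revert y.
  apply (generated_by_ind xs); [exact Hgen|apply (normal_comm_l_subgroup HN)|].
  intros x Hin. apply (normal_comm_sym HN), Hx, Hin.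
Qed.

(* [center_mod N] is the preimage of the centre of G/N. *)
Definition center_mod {G : group} (N : G -> Prop) : G -> Prop :=
  fun g => forall y, N (comm g y).

Fixpoint upper_central {G : group} (N : G -> Prop) (t : nat) : G -> Prop :=
  match t with 0 => N | S t' => center_mod (upper_central N t') end.

Section UpperCentral.
Context {G : group}.

Lemma normal_center_mod (N : G -> Prop) : normal N -> normal (center_mod N).
Proof.
  intros HN. split; [split; [|split]|].
  - intro y. apply (normal_comm_l_subgroup HN).
  - intros a b Ha Hb y. apply (normal_comm_l_subgroup HN); auto.
  - intros a Ha y. apply (normal_comm_l_subgroup HN); auto.
  - intros g h Hg y. rewrite <- conj_comm. apply (normal_conj HN), Hg.
Qed.

Lemma normal_upper_central (N : G -> Prop) t : normal N -> normal (upper_central N t).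
Proof. intro HN. induction t; simpl; auto using normal_center_mod. Qed.

Lemma gamma_word_SS k (a : nat -> G) :
  gamma_word G (S (S k)) a = comm (gamma_word G (S k) a) (a (S k)).
Proof. reflexivity. Qed.

Lemma upper_central_gamma_word (N : G -> Prop) j : forall i (a : nat -> G),
  (forall g, upper_central N (j + i) g) -> upper_central N i (gamma_word G (S j) a).
Proof.
  induction j as [|j IH]; intros i a Hall; [apply Hall|].
  rewrite gamma_word_SS. apply (IH (S i)). rewrite <- Nat.add_succ_comm. exact Hall.
Qed.

Lemma gamma_sub_incl (M : G -> Prop) t :
  normal M -> (forall g, upper_central M t g) -> forall g, gamma_sub G (S t) g -> M g.
Proof.
  intros HM Hall g Hg. induction Hg as [g [a ->]| | |].
  - apply (upper_central_gamma_word M t 0). rewrite Nat.add_0_r. exact Hall.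
  - apply (normal_one HM).
  - apply (normal_mul HM); auto.
  - apply (normal_inv HM); auto.
Qed.

Lemma upper_central_all (xs : list G) (M : G -> Prop) t :
  generated_by xs -> normal M ->
  (forall x y, In x xs -> In y xs -> upper_central M t (comm x y)) ->
  forall g, upper_central M (S t) g.
Proof.
  intros Hgen HM Hxy. apply (generated_by_ind xs); [exact Hgen| |].
  - apply (normal_upper_central M (S t) HM).
  - intros x Hx y. apply (normal_comm_generators xs); auto using normal_upper_central.
Qed.

Lemma gamma_word_ext k (a a' : nat -> G) :
  (forall i, i <= k -> a i = a' i) -> gamma_word G (S k) a = gamma_word G (S k) a'.
Proof.
  induction k as [|k IH]; intro H; [apply H; lia|].
  rewrite !gamma_word_SS, IH, H; auto with arith.
Qed.

Lemma gamma_values_comm k (c x : G) :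
  gamma_values G (S k) c -> gamma_values G (S (S k)) (comm c x).
Proof.
  intros [a ->]. exists (fun i => if Nat.eqb i (S k) then x else a i).
  rewrite gamma_word_SS, Nat.eqb_refl. f_equal. apply gamma_word_ext.
  intros i Hi. destruct (Nat.eqb_spec i (S k)); [lia|reflexivity].
Qed.

End UpperCentral.

Section PairsAndLayers.
Context {G : group}.

Fixpoint pair_comms (xs : list G) : list G :=
  match xs with [] => [] | x :: xs' => map (comm x) xs' ++ pair_comms xs' end.

Lemma length_pair_comms (xs : list G) :
  2 * length (pair_comms xs) = length xs * (length xs - 1).
Proof.
  induction xs as [|x xs IH]; simpl; [reflexivity|].
  rewrite length_app, length_map. destruct (length xs); nia.
Qed.

Lemma pair_comms_gamma_values (xs : list G) c :
  In c (pair_comms xs) -> gamma_values G 2 c.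
Proof.
  induction xs as [|x xs IH]; simpl; [intros []|].
  intro Hc. apply in_app_or in Hc. destruct Hc as [Hc|Hc]; [|auto].
  apply in_map_iff in Hc. destruct Hc as [y [<- _]].
  exists (fun i => match i with 0 => x | _ => y end). reflexivity.
Qed.

Lemma normal_comm_of_pair_comms (xs : list G) (N : G -> Prop) :
  normal N -> (forall c, In c (pair_comms xs) -> N c) ->
  forall x y, In x xs -> In y xs -> N (comm x y).
Proof.
  intros HN. induction xs as [|a xs IH]; intros Hpairs x y Hx Hy; [contradiction|].
  assert (Hhead : forall b, In b xs -> N (comm a b)).
  { intros b Hb. apply Hpairs, in_or_app. left. apply in_map, Hb. }
  assert (Htail : forall c, In c (pair_comms xs) -> N c).
  { intros c Hc. apply Hpairs, in_or_app. right. exact Hc. }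
  destruct Hx as [<-|Hx], Hy as [<-|Hy].
  - rewrite comm_self. apply (normal_one HN).
  - auto.
  - apply (normal_comm_sym HN). auto.
  - auto.
Qed.

Definition comm_layer (xs L : list G) : list G := flat_map (fun c => map (comm c) xs) L.

Lemma length_comm_layers (xs L : list G) t :
  length (Nat.iter t (comm_layer xs) L) = length L * length xs ^ t.
Proof.
  induction t as [|t IH]; simpl; [lia|].
  unfold comm_layer at 1. rewrite (flat_map_constant_length (c := length xs)), IH; [lia|].
  intros c _. apply length_map.
Qed.

Lemma comm_layers_gamma_values (xs L : list G) k t :
  (forall c, In c L -> gamma_values G (S k) c) ->
  forall c, In c (Nat.iter t (comm_layer xs) L) -> gamma_values G (S (t + k)) c.
Proof.
  intro HL. induction t as [|t IH]; [exact HL|].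
  intros c Hc. simpl in Hc. unfold comm_layer in Hc.
  apply in_flat_map in Hc. destruct Hc as [c' [Hc' Hc]].
  apply in_map_iff in Hc. destruct Hc as [x [<- _]].
  apply gamma_values_comm, IH, Hc'.
Qed.

Lemma upper_central_of_comm_layers (xs : list G) (M : G -> Prop) :
  generated_by xs -> normal M -> forall i L,
  (forall c, In c (Nat.iter i (comm_layer xs) L) -> M c) ->
  forall c, In c L -> upper_central M i c.
Proof.
  intros Hgen HM i. induction i as [|i IH]; intros L HL c Hc; [exact (HL c Hc)|].
  intro y. apply (normal_comm_generators xs); auto using normal_upper_central.
  intros x Hx. apply (IH (comm_layer xs L)).
  - intros c' Hc'. apply HL. rewrite Nat.iter_succ_r. exact Hc'.
  - apply in_flat_map. exists c. split; [exact Hc|]. apply in_map, Hx.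
Qed.

End PairsAndLayers.

Definition setmul {G : group} (A B : G -> Prop) : G -> Prop :=
  fun g => exists u v, A u /\ B v /\ g = u ** v.

Lemma normal_setmul {G : group} (A B : G -> Prop) :
  normal A -> normal B -> normal (setmul A B).
Proof.
  intros HA HB. split; [split; [|split]|].
  - exists (gone G), (gone G). split; [apply (normal_one HA)|split; [apply (normal_one HB)|]].
    symmetry; apply gmul1l.
  - intros x y [u1 [v1 [Hu1 [Hv1 ->]]]] [u2 [v2 [Hu2 [Hv2 ->]]]].
    exists (u1 ** u2), (conj v1 u2 ** v2). split; [|split].
    + apply (normal_mul HA); auto.
    + apply (normal_mul HB); [apply (normal_conj HB)|]; auto.
    + unfold conj; gsimpl; reflexivity.
  - intros x [u [v [Hu [Hv ->]]]]. exists (ginv u), (conj (ginv v) (ginv u)). split; [|split].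
    + apply (normal_inv HA); auto.
    + apply (normal_conj HB), (normal_inv HB); auto.
    + unfold conj; gsimpl; reflexivity.
  - intros x h [u [v [Hu [Hv ->]]]]. exists (conj u h), (conj v h). split; [|split].
    + apply (normal_conj HA); auto.
    + apply (normal_conj HB); auto.
    + apply conj_mul.
Qed.

Fixpoint comm_set_prod {G : group} (L : list G) : G -> Prop :=
  match L with
  | [] => fun g => g = gone G
  | c :: L' => setmul (comm_set c) (comm_set_prod L')
  end.

Lemma gamma_width_le_of_cover {G : group} (k m : nat) (L : list G) :
  length L <= m ->
  (forall c, In c L -> forall x, gamma_values G k (comm c x)) ->
  (forall g, gamma_sub G k g -> comm_set_prod L g) ->
  gamma_width_le G k m.
Proof.
  intros Hm Hval Hcover g Hg.
  assert (Hdecomp : forall g, comm_set_prod L g -> exists l : list (bool * G),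
    length l = length L /\ Forall (fun p => gamma_values G k (snd p)) l /\ prod_signed l = g).
  { clear Hm Hcover g Hg. induction L as [|c L IH]; intros g Hg; simpl in *.
    - exists []. subst g. repeat split; auto.
    - destruct Hg as [u [v [[x ->] [Hv ->]]]].
      destruct (IH (fun c' H => Hval c' (or_intror H)) v Hv) as [l [Hl [HF Hp]]].
      exists ((false, comm c x) :: l). simpl. split; [|split].
      + rewrite Hl; reflexivity.
      + constructor; [apply Hval; left; reflexivity|exact HF].
      + cbn. rewrite Hp, comm_inv. reflexivity. }
  destruct (Hdecomp g (Hcover g Hg)) as [l [Hl [HF Hp]]].
  exists l. repeat split; auto. lia.
Qed.

Section CommSetsSubgroups.
Context {G : group}.
Hypothesis comm_set_subgroup : forall g : G, is_subgroup (comm_set g).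

Lemma normal_comm_set (c : G) : normal (comm_set c).
Proof.
  split; auto. intros u h [x ->]. rewrite conj_comm_r.
  destruct (comm_set_subgroup c) as [_ [Hmul Hinv]].
  apply Hmul; [exists (x ** h); reflexivity|]. apply Hinv. exists h; reflexivity.
Qed.

Lemma normal_comm_set_prod (L : list G) : normal (comm_set_prod L).
Proof.
  induction L as [|c L IH]; simpl; [|apply normal_setmul; auto using normal_comm_set].
  split; [split; [|split]|]; cbn.
  - reflexivity.
  - intros x y -> ->. apply gmul1l.
  - intros x ->. apply ginv_one.
  - intros x h ->. unfold conj. gsimpl. reflexivity.
Qed.

Lemma comm_set_prod_comm_l (L : list G) (c x : G) : In c L -> comm_set_prod L (comm x c).
Proof.
  induction L as [|c' L IH]; intros Hin; simpl in *; [contradiction|].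
  destruct Hin as [->|Hin].
  - exists (comm x c), (gone G). split; [|split].
    + exists x; reflexivity.
    + apply (normal_one (normal_comm_set_prod L)).
    + gsimpl; reflexivity.
  - exists (gone G), (comm x c). split; [|split].
    + apply (normal_one (normal_comm_set c')).
    + apply IH, Hin.
    + gsimpl; reflexivity.
Qed.

Lemma comm_set_prod_comm_r (L : list G) (c x : G) : In c L -> comm_set_prod L (comm c x).
Proof.
  intro Hin. apply (normal_comm_sym (normal_comm_set_prod L)), comm_set_prod_comm_l, Hin.
Qed.


Lemma gamma2_width (xs : list G) :
  generated_by xs -> gamma_width_le G 2 (length xs - 1).
Proof.
  intro Hgen.
  assert (Hsplit : exists l z, length l = length xs - 1 /\
                     forall y, In y xs -> In y l \/ y = z).
  { destruct xs as [|x0 xs0]; [exists [], (gone G); split; [reflexivity|intros y []]|].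
    destruct (exists_last (l := x0 :: xs0)) as [l [z Hxs]]; [discriminate|].
    exists l, z. rewrite Hxs, length_app. split; [simpl; lia|].
    intros y Hy. apply in_app_or in Hy. destruct Hy as [Hy|[<-|[]]]; auto. }
  destruct Hsplit as [l [z [Hl Hxs]]].
  apply (gamma_width_le_of_cover 2 (length xs - 1) l); [lia| |].
  - intros c _ x. exists (fun i => match i with 0 => c | _ => x end). reflexivity.
  - apply (gamma_sub_incl _ 1 (normal_comm_set_prod l)).
    apply (upper_central_all xs _ 0 Hgen (normal_comm_set_prod l)). cbn.
    intros x y Hx Hy.
    destruct (Hxs y Hy) as [Hyl| ->]; [apply comm_set_prod_comm_l, Hyl|].
    destruct (Hxs x Hx) as [Hxl| ->]; [apply comm_set_prod_comm_r, Hxl|].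
    rewrite comm_self. apply (normal_one (normal_comm_set_prod l)).
Qed.


Lemma comm_set_prod_comm_layer (xs L : list G) c :
  In c (comm_layer xs L) -> comm_set_prod L c.
Proof.
  intro Hc. apply in_flat_map in Hc. destruct Hc as [c' [Hc' Hc]].
  apply in_map_iff in Hc. destruct Hc as [x [<- _]].
  apply comm_set_prod_comm_r, Hc'.
Qed.

Lemma gamma_width_ge3 (xs : list G) t :
  generated_by xs ->
  gamma_width_le G (S (S (S t))) (length xs ^ S t * (length xs - 1) / 2).
Proof.
  intro Hgen.
  set (W := Nat.iter t (comm_layer xs) (pair_comms xs)).
  pose proof (normal_comm_set_prod W) as HM.
  apply (gamma_width_le_of_cover _ _ W).
  - unfold W. rewrite length_comm_layers.
    pose proof (length_pair_comms xs) as Hpairs.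
    set (n := length xs) in *. set (P := length (pair_comms xs)) in *.
    replace (n ^ S t * (n - 1)) with (P * n ^ t * 2) by (simpl; nia).
    rewrite Nat.div_mul; lia.
  - intros c Hc x. rewrite <- (Nat.add_1_r t).
    apply gamma_values_comm.
    apply (comm_layers_gamma_values xs (pair_comms xs) 1 t); [|exact Hc].
    apply pair_comms_gamma_values.
  - apply (gamma_sub_incl _ (S (S t)) HM).
    apply (upper_central_all xs _ (S t) Hgen HM).
    apply (normal_comm_of_pair_comms xs _ (normal_upper_central _ _ HM)).
    apply (upper_central_of_comm_layers xs _ Hgen HM (S t)).
    intros c Hc. rewrite Nat.iter_succ in Hc. apply (comm_set_prod_comm_layer xs), Hc.
Qed.

End CommSetsSubgroups.

Theorem corollary1 (G : group) (n : nat) (xs : list G)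
  (Hlen : length xs = n) (Hgen : generated_by xs)
  (Hcomm : forall g : G, is_subgroup (comm_set g)) :
  gamma_width_le G 2 (n - 1) /\
  (forall k : nat, 3 <= k -> gamma_width_le G k (n ^ (k - 2) * (n - 1) / 2)).
Proof.
  subst n. split.
  - exact (gamma2_width Hcomm xs Hgen).
  - intros k Hk. destruct k as [|[|[|t]]]; try lia.
    replace (S (S (S t)) - 2) with (S t) by lia.
    exact (gamma_width_ge3 Hcomm xs t Hgen).
Qed.
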